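(* For every nonzero function $f:\mathbb{F}_2^n\to\mathbb{C}$ and every Lagrangian subspace $L\le\mathbb{F}_2^{2n}$, $$P_f(L)\le\max_{\phi:\ \mathcal{L}(\phi)=L}\Big(\frac{|\langle f,\phi\rangle|}{\|f\|_2}\Big)^2,$$ the maximum being over stabilizer states $\phi$ with $\mathcal{L}(\phi)=L$.
   Context: $\langle f,g\rangle=\mathbb{E}_xf(x)\overline{g(x)}$, $\|f\|_2=\langle f,f\rangle^{1/2}$, $\Delta_af(x)=f(x+a)\overline{f(x)}$, $\hat g(b)=\mathbb{E}_xg(x)(-1)^{b\cdot x}$, $\|f\|_{U^3}=(\mathbb{E}_{x,a,b,c}\Delta_a\Delta_b\Delta_cf(x))^{1/8}$. A Lagrangian subspace of $\mathbb{F}_2^{2n}$ is a maximal isotropic subspace for $[(a,b),(c,d)]=a\cdot d+b\cdot c$. A stabilizer state is $\phi$ with $\|\phi\|_2=\|\phi\|_{U^3}=1$; $\mathcal{L}(\phi)$ is the unique Lagrangian with $|\widehat{\Delta_a\phi}(b)|=\mathbf{1}_{\mathcal{L}(\phi)}(a,b)$. $P_f(a,b)=|\widehat{\Delta_af}(b)|^2/(2^n\|f\|_2^4)$ and $P_f(L)=\sum_{(a,b)\in L}P_f(a,b)$. *)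

From HB Require Import structures.
From mathcomp Require Import all_boot all_order all_algebra.
From mathcomp Require Import complex.
From mathcomp Require Import reals.
Set Implicit Arguments. Unset Strict Implicit. Unset Printing Implicit Defensive.
Import Order.TTheory GRing.Theory Num.Theory.
Local Open Scope ring_scope.

Section Defs.
Variables (R : realType) (n : nat).
Local Notation C := R[i].
Definition vec := 'rV['F_2]_n.

Definition dot (b x : vec) : 'F_2 := \sum_(i < n) b 0 i * x 0 i.
Definition chr (b x : vec) : C := if dot b x == 0 then 1 else -1.

Definition avg (g : vec -> C) : C := (#|{: vec}|%:R)^-1 * \sum_(x : vec) g x.

Definition inner (f g : vec -> C) : C := avg (fun x => f x * Num.conj (g x)).
Definition norm2 (f : vec -> C) : C := sqrtC (inner f f).
Definition Delta (a : vec) (f : vec -> C) : vec -> C :=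
  fun x => f (x + a) * Num.conj (f x).
Definition fhat (g : vec -> C) (b : vec) : C := avg (fun x => g x * chr b x).
Definition U3 (f : vec -> C) : C :=
  8.-root (avg (fun x => avg (fun a => avg (fun b => avg (fun c =>
    Delta a (Delta b (Delta c f)) x))))).

(* F_2^{2n} = F_2^n x F_2^n, symplectic form [(a,b),(c,d)] = a.d + b.c *)
Definition sympl (u v : vec * vec) : 'F_2 := dot u.1 v.2 + dot u.2 v.1.
Definition subspace (L : {set vec * vec}) : Prop :=
  (0, 0) \in L /\ forall u v, u \in L -> v \in L -> (u.1 + v.1, u.2 + v.2) \in L.
Definition isotropic (L : {set vec * vec}) : Prop :=
  forall u v, u \in L -> v \in L -> sympl u v = 0.
Definition lagrangian (L : {set vec * vec}) : Prop :=
  subspace L /\ isotropic L /\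
  forall M : {set vec * vec}, subspace M -> isotropic M -> L \subset M -> M = L.

Definition stabilizer_state (phi : vec -> C) : Prop :=
  norm2 phi = 1 /\ U3 phi = 1.
Definition LagOf (phi : vec -> C) (L : {set vec * vec}) : Prop :=
  forall a b : vec, `|fhat (Delta a phi) b| = (if (a, b) \in L then 1 else 0).

Definition Pf (f : vec -> C) (a b : vec) : C :=
  `|fhat (Delta a f) b| ^+ 2 / (2 ^+ n * norm2 f ^+ 4).
Definition PfL (f : vec -> C) (L : {set vec * vec}) : C :=
  \sum_(u in L) Pf f u.1 u.2.
End Defs.

(* For u = (a, b) the Weyl operator [weyl u] g x = g (x + a) (-1)^(b.x) satisfies
   fhat (Delta a g) b = <weyl u g, g>.  After a phase (making it a self-adjoint
   involution) and a sign (read off a common eigenvector), u |-> [sweyl s u] is a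
   representation of the Lagrangian L by commuting operators, so
   [eigenproj w] = sum_(u in L) (-1)^[u,w] sweyl s u is |L| times the projection onto a
   joint eigenspace.  The weights q_w = <eigenproj w f, f> are nonnegative, sum to
   4^n |f|^2, and their squares sum to 4^n sum_(u in L) |<sweyl s u f, f>|^2, which is
   8^n |f|^4 P_f(L); hence P_f(L) <= max_w q_w / (2^n |f|^2).  A normalised joint
   eigenvector phi has |<weyl u phi, phi>| = 1_L(u), because off L some element of L
   anticommutes with weyl u (maximality of L); so phi is a stabilizer state with
   L(phi) = L, |L| = 2^n, and for phi the normalisation of eigenproj w f with w
   maximising q_w one gets |<f, phi>|^2 / |f|^2 = q_w / (2^n |f|^2). *)

From HB Require Import structures.
From mathcomp Require Import all_boot all_order all_algebra.
From mathcomp Require Import complex reals boolp ring.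
Set Implicit Arguments. Unset Strict Implicit. Unset Printing Implicit Defensive.
Import Order.TTheory GRing.Theory Num.Theory.
Local Open Scope ring_scope.

Lemma addrr_F2 (M : lmodType 'F_2) (x : M) : x + x = 0.
Proof. by rewrite -mulr2n -scaler_nat pchar_Fp_0 ?scale0r. Qed.

Lemma oppr_F2 (M : lmodType 'F_2) (x : M) : - x = x.
Proof. by apply/esym/eqP; rewrite -addr_eq0 addrr_F2. Qed.

Lemma addrK_F2 (M : lmodType 'F_2) (a x : M) : x + a + a = x.
Proof. by rewrite -addrA addrr_F2 addr0. Qed.

Lemma addr_eq0_F2 (M : lmodType 'F_2) (x y : M) : (x + y == 0) = (x == y).
Proof. by rewrite addr_eq0 oppr_F2. Qed.

Lemma eq_oppr_eq0 (K : numDomainType) (x : K) : x = - x -> x = 0.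
Proof.
move/eqP; rewrite -subr_eq0 opprK -mulr2n -mulr_natr mulf_eq0 pnatr_eq0 orbF.
by move/eqP.
Qed.

Section SignF2.
Variable K : nzRingType.

Definition sgnF2 (t : 'F_2) : K := if t == 0 then 1 else -1.

Lemma sgnF2_0 : sgnF2 0 = 1.
Proof. by rewrite /sgnF2 eqxx. Qed.

Lemma sgnF2D s t : sgnF2 (s + t) = sgnF2 s * sgnF2 t.
Proof.
rewrite /sgnF2; case: s t => [[|[|]] // ?] [[|[|]] // ?].
all: by rewrite /= ?mulrNN ?mul1r ?mulr1.
Qed.

Lemma sgnF2K t : sgnF2 t * sgnF2 t = 1.
Proof. by rewrite -sgnF2D addrr_pchar2 ?pchar_Fp ?sgnF2_0. Qed.

End SignF2.

Lemma conj_sgnF2 (K : numClosedFieldType) t : (sgnF2 K t)^* = sgnF2 K t.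
Proof. by rewrite /sgnF2; case: ifP; rewrite ?rmorphN rmorph1. Qed.

Lemma normr_sgnF2 (K : numDomainType) t : `|sgnF2 K t| = 1.
Proof. by rewrite /sgnF2; case: ifP; rewrite ?normrN normr1. Qed.

Section Stabilizer.
Variables (R : realType) (n : nat).
Local Notation C := R[i].
Local Notation V := (vec n).
Local Notation N := (2 ^+ n : C).
Implicit Types (f g h phi : V -> C) (a b x y : V).

Lemma dotC a b : dot a b = dot b a.
Proof. by apply: eq_bigr => i _; rewrite mulrC. Qed.

Lemma dotDr a x y : dot a (x + y) = dot a x + dot a y.
Proof. by rewrite /dot -big_split; apply: eq_bigr => i _; rewrite !mxE mulrDr. Qed.

Lemma dotDl a b x : dot (a + b) x = dot a x + dot b x.
Proof. by rewrite dotC dotDr ![dot x _]dotC. Qed.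

Lemma dot0r a : dot a 0 = 0.
Proof. by rewrite /dot big1 // => i _; rewrite mxE mulr0. Qed.

Lemma dot0l a : dot 0 a = 0.
Proof. by rewrite dotC dot0r. Qed.

Lemma chrE b x : chr R b x = sgnF2 C (dot b x).
Proof. by []. Qed.

Lemma chrC b x : chr R b x = chr R x b.
Proof. by rewrite !chrE dotC. Qed.

Lemma chrDr b x y : chr R b (x + y) = chr R b x * chr R b y.
Proof. by rewrite !chrE dotDr sgnF2D. Qed.

Lemma chrDl b b' x : chr R (b + b') x = chr R b x * chr R b' x.
Proof. by rewrite !chrE dotDl sgnF2D. Qed.

Lemma chr0l b : chr R 0 b = 1.
Proof. by rewrite chrE dot0l sgnF2_0. Qed.

Lemma chrK b x : chr R b x * chr R b x = 1.
Proof. exact: sgnF2K. Qed.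

Lemma conj_chr b x : (chr R b x)^* = chr R b x.
Proof. exact: conj_sgnF2. Qed.

Lemma card_vecC : #|{: V}|%:R = N.
Proof. by rewrite card_mx card_Fp // mul1n natrX. Qed.

Lemma N_gt0 : 0 < N.
Proof. by rewrite exprn_gt0 ?ltr0n. Qed.

Lemma N_neq0 : N != 0.
Proof. by rewrite gt_eqF ?N_gt0. Qed.

Lemma sum_addr (F : V -> C) a : \sum_x F (x + a) = \sum_x F x.
Proof. by rewrite [RHS](reindex_inj (addIr a)). Qed.

Lemma sum_chr b : \sum_x chr R b x = if b == 0 then N else 0.
Proof.
have [-> | /eqP nz_b] := eqVneq b 0.
  by rewrite (eq_bigr (fun=> 1)) => [|x _]; rewrite ?chr0l // sumr_const card_vecC.
have [i nz_bi] : exists i, b 0 i != 0.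
  apply/existsP; apply: contraT; rewrite negb_exists => /forallP b0.
  by case: nz_b; apply/matrixP => k j; rewrite ord1 mxE; apply/eqP/negPn/b0.
pose e : V := delta_mx 0 i.
have chr_e : chr R b e = -1.
  rewrite chrE /dot (bigD1 i) //= big1 => [|j /negbTE ji]; last by rewrite !mxE ji andbF mulr0.
  by rewrite !mxE !eqxx mulr1 addr0 /sgnF2 (negbTE nz_bi).
(* Translating by e negates every term, and leaves the sum unchanged. *)
apply: eq_oppr_eq0; rewrite -{1}(sum_addr _ e) -sumrN.
by apply: eq_bigr => x _; rewrite chrDr chr_e mulrN1.
Qed.

Lemma sum_chrM x y : \sum_b chr R b x * chr R b y = if x == y then N else 0.
Proof.
under eq_bigr => b _ do rewrite -chrDr chrC.
by rewrite sum_chr addr_eq0_F2.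
Qed.

Lemma avgE (F : V -> C) : avg F = N^-1 * \sum_x F x.
Proof. by rewrite /avg card_vecC. Qed.

Lemma eq_avg (F G : V -> C) : (forall x, F x = G x) -> avg F = avg G.
Proof. by move=> FG; rewrite !avgE; under eq_bigr do rewrite FG. Qed.

Lemma avgZ c (F : V -> C) : avg (fun x => c * F x) = c * avg F.
Proof. by rewrite !avgE -mulr_sumr mulrCA. Qed.

Lemma avg_sum (I : finType) (P : pred I) (F : I -> V -> C) :
  avg (fun x => \sum_(i | P i) F i x) = \sum_(i | P i) avg (F i).
Proof. by rewrite avgE exchange_big mulr_sumr; under [RHS]eq_bigr do rewrite avgE. Qed.

Lemma conj_avg (F : V -> C) : (avg F)^* = avg (fun x => (F x)^*).
Proof. by rewrite !avgE rmorphM rmorph_sum fmorphV rmorphXn rmorph_nat. Qed.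

Lemma avg_addr (F : V -> C) a : avg (fun x => F (x + a)) = avg F.
Proof. by rewrite !avgE sum_addr. Qed.

Lemma avg_addl (F : V -> C) a : avg (fun x => F (a + x)) = avg F.
Proof. by rewrite -(avg_addr F a); apply: eq_avg => x; rewrite addrC. Qed.

Lemma exchange_avg (F : V -> V -> C) :
  avg (fun x => avg (F x)) = avg (fun y => avg (F^~ y)).
Proof.
rewrite avgE (eq_bigr _ (fun x _ => avgE (F x))) -mulr_sumr exchange_big.
by rewrite avgE; congr (_ * _); rewrite mulr_sumr; under [RHS]eq_bigr do rewrite avgE.
Qed.

Lemma exchange_avg4 (F : V -> V -> V -> V -> C) :
  avg (fun x => avg (fun a => avg (fun b => avg (fun c => F x a b c)))) =
  avg (fun c => avg (fun x => avg (fun a => avg (fun b => F x a b c)))).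
Proof.
rewrite -(exchange_avg (fun x c => avg (fun a => avg (fun b => F x a b c)))).
apply: eq_avg => x.
rewrite -(exchange_avg (fun a c => avg (fun b => F x a b c))).
by apply: eq_avg => a; rewrite (exchange_avg (fun b c => F x a b c)).
Qed.

Lemma innerZl c f g : inner (fun x => c * f x) g = c * inner f g.
Proof. by rewrite -avgZ; apply: eq_avg => x; rewrite mulrA. Qed.

Lemma innerZr c f g : inner f (fun x => c * g x) = c^* * inner f g.
Proof. by rewrite -avgZ; apply: eq_avg => x; rewrite rmorphM /= mulrCA. Qed.

Lemma inner_suml (I : finType) (P : pred I) (F : I -> V -> C) g :
  inner (fun x => \sum_(i | P i) F i x) g = \sum_(i | P i) inner (F i) g.
Proof. by rewrite -avg_sum; apply: eq_avg => x; rewrite mulr_suml. Qed.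

Lemma inner_sumr (I : finType) (P : pred I) (F : I -> V -> C) g :
  inner g (fun x => \sum_(i | P i) F i x) = \sum_(i | P i) inner g (F i).
Proof. by rewrite -avg_sum; apply: eq_avg => x; rewrite rmorph_sum mulr_sumr. Qed.

Lemma inner_ge0 f : 0 <= inner f f.
Proof.
rewrite /inner avgE mulr_ge0 ?sumr_ge0 // => [|x _]; last exact: mul_conjC_ge0.
by rewrite invr_ge0 ltW ?N_gt0.
Qed.

Lemma inner_gt0 f : (exists x, f x != 0) -> 0 < inner f f.
Proof.
case=> x nz_fx; rewrite /inner avgE mulr_gt0 ?invr_gt0 ?N_gt0 //.
rewrite (bigD1 x) //= ltr_pwDl ?sumr_ge0 // => [|y _]; last exact: mul_conjC_ge0.
by rewrite lt_def mul_conjC_eq0 nz_fx mul_conjC_ge0.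
Qed.

Lemma parseval g : \sum_b `|fhat g b| ^+ 2 = inner g g.
Proof.
have fhat2 b : `|fhat g b| ^+ 2 =
    N^-1 * N^-1 * \sum_x \sum_y g x * (g y)^* * (chr R b x * chr R b y).
  rewrite normCK /fhat conj_avg !avgE mulrACA big_distrlr /=; congr (_ * _).
  apply: eq_bigr => x _; apply: eq_bigr => y _.
  by rewrite rmorphM /= conj_chr; ring.
under eq_bigr do rewrite fhat2.
rewrite -mulr_sumr exchange_big /= /inner avgE -mulrA; congr (_ * _).
rewrite mulr_sumr; apply: eq_bigr => x _.
rewrite exchange_big /=; under eq_bigr do rewrite -mulr_sumr sum_chrM.
rewrite (bigD1 x) //= eqxx big1 => [|y /negbTE]; last by rewrite eq_sym => ->; rewrite mulr0.
by rewrite addr0 mulrCA mulVf ?mulr1 ?N_neq0.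
Qed.

Lemma sum_inner_Delta g : \sum_a inner (Delta a g) (Delta a g) = N * inner g g ^+ 2.
Proof.
have sum_g : \sum_a g a * (g a)^* = N * inner g g.
  by rewrite /inner avgE mulrA mulfV ?mul1r ?N_neq0.
rewrite -avg_sum.
transitivity (avg (fun x => N * inner g g * (g x * (g x)^*))); last by rewrite avgZ -mulrA -expr2.
apply: eq_avg => x; rewrite -sum_g mulr_suml -[RHS](sum_addr _ x); apply: eq_bigr => a _.
by rewrite /Delta rmorphM /= conjCK [a + x]addrC; ring.
Qed.

Definition autocorr h a : C := avg (Delta a h).

Lemma avg_DeltaDelta h a :
  avg (fun x => avg (fun b => Delta a (Delta b h) x)) = `|autocorr h a| ^+ 2.
Proof.
have avg_b x : avg (fun b => Delta a (Delta b h) x) = (Delta a h x)^* * autocorr h a.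
  rewrite /autocorr -[avg (Delta a h)](avg_addl _ x) -avgZ; apply: eq_avg => b.
  by rewrite /Delta !rmorphM /= conjCK addrAC; ring.
rewrite (eq_avg avg_b) normCK {2}/autocorr conj_avg -avgZ.
by apply: eq_avg => x; rewrite mulrC.
Qed.

Lemma fhat_autocorr h c : fhat (autocorr h) c = `|fhat h c| ^+ 2.
Proof.
have avg_a x : avg (fun a => h (x + a) * chr R c a) = chr R c x * fhat h c.
  rewrite -avgZ -[RHS](avg_addl _ x); apply: eq_avg => a.
  by rewrite chrDr -[LHS]mul1r -(chrK c x); ring.
rewrite normCK {2}/fhat conj_avg /fhat /autocorr.
transitivity (avg (fun a => avg (fun x => h (x + a) * chr R c a * (h x)^*))).
  by apply: eq_avg => a; rewrite mulrC -avgZ; apply: eq_avg => x; rewrite /Delta; ring.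
rewrite exchange_avg -avgZ; apply: eq_avg => x.
transitivity ((h x)^* * avg (fun a => h (x + a) * chr R c a)).
  by rewrite -avgZ; apply: eq_avg => a; ring.
by rewrite avg_a /fhat rmorphM /= conj_chr; ring.
Qed.

Lemma gowers_U2_fourier h :
  avg (fun x => avg (fun a => avg (fun b => Delta a (Delta b h) x))) =
  \sum_c `|fhat h c| ^+ 4.
Proof.
transitivity (inner (autocorr h) (autocorr h)).
  by rewrite exchange_avg; apply: eq_avg => a; rewrite avg_DeltaDelta normCK.
rewrite -parseval; apply: eq_bigr => c _.
by rewrite fhat_autocorr normrX normr_id -exprM.
Qed.

Implicit Types (u v w : V * V) (L : {set V * V}).

Lemma sum_indicator L : \sum_a \sum_b (if (a, b) \in L then 1 else 0 : C) = #|L|%:R.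
Proof.
rewrite pair_bigA /= -sum1_card natr_sum [RHS]big_mkcond /=.
by apply: eq_bigr => -[a b] _.
Qed.

Lemma LagOf_fhat_expS phi L a b k : LagOf phi L ->
  `|fhat (Delta a phi) b| ^+ k.+1 = if (a, b) \in L then 1 else 0.
Proof. by move=> /(_ a b) ->; case: ifP; rewrite ?expr1n ?expr0n. Qed.

Lemma card_LagOf phi L : inner phi phi = 1 -> LagOf phi L -> #|L|%:R = N.
Proof.
move=> phi_norm phiL; rewrite -sum_indicator.
under eq_bigr => a _ do under eq_bigr => b _ do rewrite -(LagOf_fhat_expS a b 1 phiL).
by under eq_bigr do rewrite parseval; rewrite sum_inner_Delta phi_norm expr1n mulr1.
Qed.

Lemma LagOf_stabilizer phi L : inner phi phi = 1 -> LagOf phi L -> stabilizer_state phi.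
Proof.
move=> phi_norm phiL; split; first by rewrite /norm2 phi_norm sqrtC1.
rewrite /U3 exchange_avg4.
under eq_avg => c do rewrite gowers_U2_fourier.
under eq_avg => c do under eq_bigr => b _ do rewrite (LagOf_fhat_expS c b 3 phiL).
by rewrite avgE sum_indicator (card_LagOf phi_norm phiL) mulVf ?N_neq0 ?rootC1.
Qed.

Lemma symplC u v : sympl u v = sympl v u.
Proof. by rewrite /sympl addrC (dotC u.1) (dotC u.2). Qed.

Lemma symplDl u v w : sympl (u + v) w = sympl u w + sympl v w.
Proof. by rewrite /sympl !dotDl addrACA. Qed.

Lemma symplDr u v w : sympl u (v + w) = sympl u v + sympl u w.
Proof. by rewrite symplC symplDl !(symplC u). Qed.

Lemma symplxx u : sympl u u = 0.
Proof. by rewrite /sympl dotC addrr_pchar2 ?pchar_Fp. Qed.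

Lemma chr_sympl u v : chr R v.2 u.1 * chr R u.2 v.1 = sgnF2 C (sympl u v).
Proof. by rewrite !chrE /sympl sgnF2D dotC. Qed.

Lemma sum_sgnF2_sympl u : \sum_w sgnF2 C (sympl u w) = if u == 0 then N * N else 0.
Proof.
rewrite (eq_bigr (fun w => chr R u.2 w.1 * chr R u.1 w.2)) => [|w _]; last first.
  by rewrite /sympl sgnF2D mulrC.
rewrite -(pair_bigA _ (fun a b => chr R u.2 a * chr R u.1 b)) /=.
under eq_bigr do rewrite -mulr_sumr.
rewrite -mulr_suml !sum_chr.
by case: u => a b; rewrite xpair_eqE; case: (a == 0); case: (b == 0); rewrite ?mulr0 ?mul0r.
Qed.

Definition weyl u g : V -> C := fun x => g (x + u.1) * chr R u.2 x.

Lemma fhat_Delta a b g : fhat (Delta a g) b = inner (weyl (a, b) g) g.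
Proof. by apply: eq_avg => x; rewrite /Delta /weyl /= mulrAC. Qed.

Lemma weyl0 g : weyl 0 g = g.
Proof. by apply: funext => x; rewrite /weyl /= addr0 chr0l mulr1. Qed.

Lemma weylZ u c g : weyl u (fun y => c * g y) = (fun x => c * weyl u g x).
Proof. by apply: funext => x; rewrite /weyl mulrA. Qed.

Lemma weylD u g h : weyl u (fun y => g y + h y) = (fun x => weyl u g x + weyl u h x).
Proof. by apply: funext => x; rewrite /weyl mulrDl. Qed.

Lemma weyl_sum u (I : finType) (P : pred I) (F : I -> V -> C) :
  weyl u (fun y => \sum_(i | P i) F i y) = (fun x => \sum_(i | P i) weyl u (F i) x).
Proof. by apply: funext => x; rewrite /weyl mulr_suml. Qed.

Lemma weylM u v g : weyl u (weyl v g) = (fun x => chr R v.2 u.1 * weyl (u + v) g x).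
Proof.
by apply: funext => x; rewrite /weyl /= chrDr chrDl -addrA [u.1 + v.1]addrC; ring.
Qed.

Lemma weyl_comm u v g :
  weyl u (weyl v g) = (fun x => sgnF2 C (sympl u v) * weyl v (weyl u g) x).
Proof.
apply: funext => x; rewrite !weylM -chr_sympl [v + u]addrC.
by rewrite -[LHS]mul1r -(chrK u.2 v.1); ring.
Qed.

Lemma weyl_adj u g h : inner (weyl u g) h = chr R u.2 u.1 * inner g (weyl u h).
Proof.
rewrite -avgZ -[LHS](avg_addr _ u.1); apply: eq_avg => x.
by rewrite /weyl -addrA addrr_F2 addr0 chrDr rmorphM /= conj_chr; ring.
Qed.

(* weyl u squares to the sign chr u.2 u.1 = (-1)^(u.1.u.2); the phase i^(u.1.u.2)
   turns it into the self-adjoint involution [hweyl u]. *)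
Definition weyl_phase u : C := if dot u.1 u.2 == 0 then 1 else 'i.

Lemma weyl_phaseK u : weyl_phase u * weyl_phase u * chr R u.2 u.1 = 1.
Proof.
rewrite chrE dotC /weyl_phase /sgnF2; case: ifP => _; first by rewrite !mulr1.
by rewrite -expr2 sqrCi mulrNN mulr1.
Qed.

Lemma conj_weyl_phase u : (weyl_phase u)^* = weyl_phase u * chr R u.2 u.1.
Proof.
rewrite chrE dotC /weyl_phase /sgnF2; case: ifP => _; first by rewrite rmorph1 mulr1.
by rewrite conjCi mulrN1.
Qed.

Lemma normr_weyl_phase u : `|weyl_phase u| = 1.
Proof. by rewrite /weyl_phase; case: ifP => _; rewrite ?normr1 ?normCi. Qed.

Definition hweyl u g : V -> C := fun x => weyl_phase u * weyl u g x.

Lemma hweylK u g : hweyl u (hweyl u g) = g.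
Proof.
by rewrite /hweyl weylZ weylM addrr_F2 weyl0; apply: funext => x; rewrite !mulrA weyl_phaseK mul1r.
Qed.

Lemma hweyl_adj u g h : inner (hweyl u g) h = inner g (hweyl u h).
Proof. by rewrite innerZl innerZr weyl_adj conj_weyl_phase mulrA. Qed.

Lemma hweyl_comm u v g : sympl u v = 0 -> hweyl u (hweyl v g) = hweyl v (hweyl u g).
Proof.
move=> uv0; rewrite /hweyl !weylZ weyl_comm uv0 sgnF2_0.
by apply: funext => x; rewrite mul1r mulrCA.
Qed.

Lemma hweylZ u c g : hweyl u (fun y => c * g y) = (fun x => c * hweyl u g x).
Proof. by rewrite /hweyl weylZ; apply: funext => x; rewrite mulrCA. Qed.

Lemma hweylD u g h : hweyl u (fun y => g y + h y) = (fun x => hweyl u g x + hweyl u h x).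
Proof. by rewrite /hweyl weylD; apply: funext => x; rewrite mulrDr. Qed.

Lemma hweylN u g : hweyl u (fun y => - g y) = (fun x => - hweyl u g x).
Proof.
have -> : (fun y => - g y) = (fun y => -1 * g y) by apply: funext => y; rewrite mulN1r.
by rewrite hweylZ; apply: funext => x; rewrite mulN1r.
Qed.

Lemma hweyl_sum u (I : finType) (P : pred I) (F : I -> V -> C) :
  hweyl u (fun y => \sum_(i | P i) F i y) = (fun x => \sum_(i | P i) hweyl u (F i) x).
Proof. by rewrite /hweyl weyl_sum; apply: funext => x; rewrite mulr_sumr. Qed.

Lemma subspace0 L : subspace L -> 0 \in L.
Proof. by case. Qed.

Lemma subspaceD L u v : subspace L -> u \in L -> v \in L -> u + v \in L.
Proof. by case=> _ closedL; apply: closedL. Qed.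

Definition extend_by (L : {set V * V}) u := L :|: [set w : V * V | w + u \in L].

Lemma subspace_extend_by L u : subspace L -> subspace (extend_by L u).
Proof.
move=> subL; split; first by rewrite inE subspace0.
move=> v w; rewrite -[(v.1 + w.1, _)]/(v + w) !inE.
move=> /orP[vL | vuL] /orP[wL | wuL].
- by rewrite (subspaceD subL vL wL).
- by rewrite -addrA (subspaceD subL vL wuL) orbT.
- by rewrite addrAC (subspaceD subL vuL wL) orbT.
- by have := subspaceD subL vuL wuL; rewrite addrACA addrr_F2 addr0 => ->.
Qed.

Lemma isotropic_extend_by L u : isotropic L ->
  (forall v, v \in L -> sympl u v = 0) -> isotropic (extend_by L u).
Proof.
move=> isoL uL0.
have sympl_L v w : v \in extend_by L u -> w \in L -> sympl v w = 0.
  rewrite !inE => /orP[vL | vuL] wL; first exact: isoL.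
  by rewrite -[v](addrK_F2 u) symplDl (isoL _ _ vuL wL) (uL0 _ wL) addr0.
have sympl_u v : v \in extend_by L u -> sympl v u = 0.
  rewrite !inE => /orP[vL | vuL]; first by rewrite symplC uL0.
  by rewrite -[v](addrK_F2 u) symplDl symplxx addr0 symplC uL0.
move=> v w vM; rewrite !inE => /orP[wL | wuL]; first exact: sympl_L.
by rewrite -[w](addrK_F2 u) symplDr (sympl_L _ _ vM wuL) (sympl_u _ vM) addr0.
Qed.

Lemma lagrangian_notin L u : lagrangian L -> u \notin L ->
  exists2 v, v \in L & sympl u v != 0.
Proof.
(* Otherwise extend_by L u would be an isotropic subspace strictly containing L. *)
move=> [subL [isoL maxL]] uL.
have [/exists_inP[v vL nz_uv] | /exists_inPn uL0] := boolP [exists v in L, sympl u v != 0].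
  by exists v.
have uL0' v : v \in L -> sympl u v = 0 by move/uL0/negPn/eqP.
have eqL := maxL _ (subspace_extend_by u subL) (isotropic_extend_by isoL uL0')
  (subsetUl _ _).
by move: uL; rewrite -eqL /extend_by !inE addrr_F2 subspace0 ?orbT.
Qed.

Lemma common_eigenvector (S : seq (V * V)) g :
  {in S &, forall u v, sympl u v = 0} -> (exists x, g x != 0) ->
  exists2 h, (exists x, h x != 0) &
    forall u, u \in S -> hweyl u h = h \/ hweyl u h = (fun x => - h x).
Proof.
elim: S => [|u S IH] isoS nz_g; first by exists g.
have [|h nz_h eig_h] := IH _ nz_g.
  by move=> v w vS wS; apply: isoS; rewrite inE ?vS ?wS orbT.
(* h + hweyl u h is a +1-eigenvector of hweyl u, unless it vanishes, in which case h
   is a -1-eigenvector. *)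
pose h' x := h x + hweyl u h x.
have [/existsP[x nz_h'x] | /existsPn h'0] := boolP [exists x, h' x != 0].
  exists h'; first by exists x.
  move=> v; rewrite inE => /predU1P[-> | vS].
    by left; rewrite /h' hweylD hweylK; apply: funext => y; rewrite addrC.
  have comm_vu : hweyl v (hweyl u h) = hweyl u (hweyl v h).
    by apply: hweyl_comm; apply: isoS; rewrite inE ?vS ?eqxx ?orbT.
  case: (eig_h v vS) => Wv_h; [left | right]; rewrite /h' hweylD comm_vu Wv_h //.
  by rewrite hweylN; apply: funext => y; rewrite opprD.
exists h => // v; rewrite inE => /predU1P[-> | ]; last exact: eig_h.
right; apply: funext => x; apply/eqP.
by rewrite -addr_eq0 addrC; apply/negPn/h'0.
Qed.

Definition sweyl (s : V * V -> 'F_2) u g : V -> C :=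
  fun x => sgnF2 C (s u) * hweyl u g x.

Lemma sweylE s u g : sweyl s u g = (fun x => sgnF2 C (s u) * weyl_phase u * weyl u g x).
Proof. by apply: funext => x; rewrite /sweyl /hweyl mulrA. Qed.

Lemma sweylM s u v g : sweyl s u (sweyl s v g) =
  (fun x => sgnF2 C (s u) * weyl_phase u * (sgnF2 C (s v) * weyl_phase v) *
            chr R v.2 u.1 * weyl (u + v) g x).
Proof. by rewrite !sweylE weylZ weylM; apply: funext => x; ring. Qed.

Lemma sweylK s u g : sweyl s u (sweyl s u g) = g.
Proof.
by rewrite /sweyl hweylZ hweylK; apply: funext => x; rewrite mulrA sgnF2K mul1r.
Qed.

Lemma sweyl_adj s u g h : inner (sweyl s u g) h = inner g (sweyl s u h).
Proof. by rewrite innerZl innerZr conj_sgnF2 hweyl_adj. Qed.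

Lemma sweylZ s u c g : sweyl s u (fun y => c * g y) = (fun x => c * sweyl s u g x).
Proof. by rewrite /sweyl hweylZ; apply: funext => x; rewrite mulrCA. Qed.

Lemma sweyl_sum s u (I : finType) (P : pred I) (F : I -> V -> C) :
  sweyl s u (fun y => \sum_(i | P i) F i y) = (fun x => \sum_(i | P i) sweyl s u (F i) x).
Proof. by rewrite /sweyl hweyl_sum; apply: funext => x; rewrite mulr_sumr. Qed.

Lemma weyl_sweyl s u v g :
  weyl u (sweyl s v g) = (fun x => sgnF2 C (sympl u v) * sweyl s v (weyl u g) x).
Proof. by rewrite !sweylE weylZ weyl_comm; apply: funext => x; ring. Qed.

Lemma exists_signed_weyl_rep L : subspace L -> isotropic L ->
  exists s, forall u v g, u \in L -> v \in L -> sweyl s u (sweyl s v g) = sweyl s (u + v) g.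
Proof.
(* Both sides are multiples of weyl (u + v) g by scalars independent of g; choosing
   the signs so that every sweyl s u fixes a common eigenvector phi of the hweyl u
   forces these scalars to agree (evaluate at a point where phi does not vanish). *)
move=> subL isoL.
have isoS : {in enum L &, forall u v, sympl u v = 0}.
  by move=> u v; rewrite !mem_enum; apply: isoL.
have nz_1 : exists x : V, 1 != 0 :> C by exists 0; rewrite oner_eq0.
have [phi [x0 nz_phi] eig_phi] := common_eigenvector isoS nz_1.
pose s u : 'F_2 := if [forall x, hweyl u phi x == phi x] then 0 else 1.
have fix_phi u : u \in L -> sweyl s u phi = phi.
  rewrite -mem_enum => /eig_phi[] Wphi; rewrite /sweyl Wphi /s.
    rewrite ifT; last by apply/forallP => x; rewrite Wphi.
    by apply: funext => x; rewrite sgnF2_0 mul1r.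
  rewrite ifF; first by apply: funext => x; rewrite /sgnF2 /= mulN1r opprK.
  apply/negbTE/negP => /forallP/(_ x0); rewrite Wphi eq_sym => /eqP/eq_oppr_eq0.
  exact/eqP.
exists s => u v g uL vL.
have uvL := subspaceD subL uL vL.
have nz_weyl : weyl (u + v) phi x0 != 0.
  by apply: contraNneq nz_phi => W0; rewrite -(fix_phi _ uvL) sweylE W0 mulr0.
have := congr1 (fun F => F x0) (sweylM s u v phi); rewrite !fix_phi //= => E1.
have := congr1 (fun F => F x0) (sweylE s (u + v) phi).
rewrite fix_phi //= E1 => /(mulIf nz_weyl) E2.
by rewrite sweylM sweylE E2.
Qed.

Definition normalize g : V -> C := fun x => (sqrtC (inner g g))^-1 * g x.

Lemma inner_normalize_self g : 0 < inner g g -> inner (normalize g) (normalize g) = 1.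
Proof.
move=> g_gt0; rewrite innerZl innerZr geC0_conj ?invr_ge0 ?sqrtC_ge0 ?ltW //.
by rewrite mulrA -expr2 exprVn sqrtCK mulVf ?gt_eqF.
Qed.

Lemma inner_normalize_r f g : inner f (normalize g) = (sqrtC (inner g g))^-1 * inner f g.
Proof. by rewrite innerZr geC0_conj // invr_ge0 sqrtC_ge0 inner_ge0. Qed.

Section JointEigenvector.
Variables (L : {set V * V}) (s : V * V -> 'F_2) (w : V * V) (phi : V -> C).
Hypothesis hL : lagrangian L.
Hypothesis phi_norm : inner phi phi = 1.
Hypothesis phi_eig : forall v, v \in L ->
  sweyl s v phi = (fun x => sgnF2 C (sympl v w) * phi x).

Lemma normr_inner_weyl_in u : u \in L -> `|inner (weyl u phi) phi| = 1.
Proof.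
move=> uL; have := congr1 (fun g => `|inner g phi|) (phi_eig uL).
rewrite /= sweylE !innerZl phi_norm mulr1 (normrM _ (inner _ _)) normrM.
by rewrite !normr_sgnF2 normr_weyl_phase !mul1r.
Qed.

Lemma inner_weyl_notin u : u \notin L -> inner (weyl u phi) phi = 0.
Proof.
(* weyl u anticommutes with sweyl s v, which acts on phi by a sign. *)
move=> uL; have [v vL /negbTE uv] := lagrangian_notin hL uL.
have sgn_uv : sgnF2 C (sympl u v) = -1 by rewrite /sgnF2 uv.
have E1 : inner (weyl u (sweyl s v phi)) phi = sgnF2 C (sympl v w) * inner (weyl u phi) phi.
  by rewrite phi_eig // weylZ innerZl.
have E2 : inner (weyl u (sweyl s v phi)) phi = - (sgnF2 C (sympl v w) * inner (weyl u phi) phi).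
  by rewrite weyl_sweyl sgn_uv innerZl sweyl_adj phi_eig // innerZr conj_sgnF2 mulN1r.
move: E2; rewrite E1 => /eq_oppr_eq0/eqP.
by rewrite mulf_eq0 -normr_eq0 normr_sgnF2 oner_eq0 => /eqP.
Qed.

Lemma eigenvector_LagOf : LagOf phi L.
Proof.
move=> a b; rewrite fhat_Delta.
by case: ifP => [/normr_inner_weyl_in // | /negbT/inner_weyl_notin ->]; rewrite normr0.
Qed.

End JointEigenvector.

Section SignedRepresentation.
Variables (L : {set V * V}) (s : V * V -> 'F_2).
Hypothesis subL : subspace L.
Hypothesis sweylM_L : forall u v g, u \in L -> v \in L ->
  sweyl s u (sweyl s v g) = sweyl s (u + v) g.
Local Notation rho := (sweyl s).

Lemma sweyl0 g : rho 0 g = g.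
Proof. by rewrite -[RHS](sweylK s 0) sweylM_L ?subspace0 // addr0. Qed.

Lemma sum_subspace_addl (F : V * V -> C) v : v \in L ->
  \sum_(u in L) F u = \sum_(u in L) F (v + u).
Proof.
move=> vL; rewrite (reindex_inj (addrI v)); apply: eq_bigl => u /=.
apply/idP/idP => [vuL | uL]; last exact: subspaceD.
by have := subspaceD subL vuL vL; rewrite addrAC addrr_F2 add0r.
Qed.

Definition eigenproj w g : V -> C :=
  fun x => \sum_(u in L) sgnF2 C (sympl u w) * rho u g x.

Lemma sweyl_eigenproj v w g : v \in L ->
  rho v (eigenproj w g) = (fun x => sgnF2 C (sympl v w) * eigenproj w g x).
Proof.
move=> vL; rewrite sweyl_sum; apply: funext => x.
under eq_bigr => u uL do rewrite sweylZ /= sweylM_L //.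
rewrite (sum_subspace_addl _ vL) mulr_sumr; apply: eq_bigr => u _.
by rewrite addrA addrr_F2 add0r symplDl sgnF2D /sweyl !mulrA.
Qed.

Lemma eigenproj_adj w g h : inner (eigenproj w g) h = inner g (eigenproj w h).
Proof.
rewrite inner_suml inner_sumr; apply: eq_bigr => u _.
by rewrite innerZl innerZr conj_sgnF2 sweyl_adj.
Qed.

Lemma eigenprojK w g : eigenproj w (eigenproj w g) = (fun x => #|L|%:R * eigenproj w g x).
Proof.
apply: funext => x; rewrite {1}/eigenproj.
under eq_bigr => u uL do rewrite sweyl_eigenproj //= mulrA sgnF2K mul1r.
by rewrite sumr_const mulr_natl.
Qed.

Section Weights.
Variable f : V -> C.

Definition corr u := inner (rho u f) f.
Definition weight w := inner (eigenproj w f) f.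

Lemma weightE w : weight w = \sum_(u in L) sgnF2 C (sympl u w) * corr u.
Proof. by rewrite /weight inner_suml; apply: eq_bigr => u _; rewrite innerZl. Qed.

Lemma sum_weight : \sum_w weight w = N * N * inner f f.
Proof.
under eq_bigr do rewrite weightE.
rewrite exchange_big /=; under eq_bigr do rewrite -mulr_suml sum_sgnF2_sympl.
rewrite (bigD1 (0 : V * V)) ?subspace0 //= eqxx big1 => [|u /andP[_ /negbTE ->]];
  last by rewrite mul0r.
by rewrite addr0 /corr sweyl0 mulrC.
Qed.

Lemma sum_weight_sqr :
  \sum_w weight w * (weight w)^* = N * N * \sum_(u in L) `|corr u| ^+ 2.
Proof.
have weight_sqr w : weight w * (weight w)^* =
    \sum_(u in L) \sum_(v in L) sgnF2 C (sympl (u + v) w) * (corr u * (corr v)^*).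
  rewrite weightE rmorph_sum big_distrlr /=; apply: eq_bigr => u _.
  by apply: eq_bigr => v _; rewrite rmorphM /= conj_sgnF2 symplDl sgnF2D; ring.
under eq_bigr do rewrite weight_sqr.
rewrite exchange_big /= mulr_sumr; apply: eq_bigr => u uL.
rewrite exchange_big /=; under eq_bigr do rewrite -mulr_suml sum_sgnF2_sympl addr_eq0_F2.
rewrite (bigD1 u) //= eqxx big1 => [|v /andP[_ /negbTE]];
  last by rewrite eq_sym => ->; rewrite mul0r.
by rewrite addr0 normCK mulrC.
Qed.

Lemma inner_eigenproj w : inner (eigenproj w f) (eigenproj w f) = #|L|%:R * weight w.
Proof. by rewrite -eigenproj_adj eigenprojK innerZl. Qed.

Lemma card_subspace_gt0 : 0 < #|L|%:R :> C.
Proof. by rewrite ltr0n; apply/card_gt0P; exists 0; apply: subspace0. Qed.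

Lemma weight_ge0 w : 0 <= weight w.
Proof.
by have := inner_ge0 (eigenproj w f); rewrite inner_eigenproj pmulr_rge0 ?card_subspace_gt0.
Qed.

Lemma inner_normalized_eigenproj w : 0 < weight w ->
  inner (normalize (eigenproj w f)) (normalize (eigenproj w f)) = 1.
Proof.
by move=> w_gt0; rewrite inner_normalize_self // inner_eigenproj mulr_gt0 ?card_subspace_gt0.
Qed.

Lemma normr_corr u : `|corr u| = `|fhat (Delta u.1 f) u.2|.
Proof.
rewrite fhat_Delta -surjective_pairing /corr sweylE innerZl normrM.
by rewrite normrM normr_sgnF2 normr_weyl_phase !mul1r.
Qed.

Hypothesis f_gt0 : 0 < inner f f.

Lemma PfL_sum_weight_sqr :
  PfL f L = (\sum_w weight w * (weight w)^*) / (N ^+ 3 * inner f f ^+ 2).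
Proof.
have norm2f4 : norm2 f ^+ 4 = inner f f ^+ 2.
  by rewrite /norm2 -[in RHS](sqrtCK (inner f f)) -exprM.
rewrite /PfL /Pf -mulr_suml sum_weight_sqr norm2f4.
under eq_bigr do rewrite -normr_corr.
by field; rewrite N_neq0 gt_eqF.
Qed.

Lemma PfL_le_max_weight w : (forall w', weight w' <= weight w) ->
  PfL f L <= weight w / (N * inner f f).
Proof.
move=> w_max.
have sqr_le : \sum_w' weight w' * (weight w')^* <= weight w * (N * N * inner f f).
  rewrite -sum_weight mulr_sumr; apply: ler_sum => w' _.
  by rewrite geC0_conj ?weight_ge0 // mulrC ler_wpM2r ?weight_ge0.
have -> : weight w / (N * inner f f) =
    weight w * (N * N * inner f f) / (N ^+ 3 * inner f f ^+ 2).
  by field; rewrite N_neq0 gt_eqF.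
by rewrite PfL_sum_weight_sqr ler_wpM2r // invr_ge0 mulr_ge0 ?exprn_ge0 ?ltW ?N_gt0.
Qed.

Lemma exists_max_weight : exists2 w, 0 < weight w & forall w', weight w' <= weight w.
Proof.
have weight_real w : w \in predT -> weight w \is Num.real.
  by move=> _; apply/ger0_real/weight_ge0.
have [w _ w_max] := @real_arg_maxP _ _ (0 : V * V) predT weight isT weight_real.
exists w => [|w']; last exact: w_max.
apply: lt_le_trans f_gt0 _.
have NN_gt0 : 0 < N * N by rewrite mulr_gt0 ?N_gt0.
rewrite -(ler_pM2l NN_gt0) -sum_weight.
apply: le_trans (ler_sum _ (fun w' _ => w_max w' isT)) _.
have cardVV : #|{: V * V}|%:R = N * N :> C by rewrite card_prod natrM card_vecC.
by rewrite sumr_const -[_ *+ _]mulr_natl cardVV.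
Qed.

Lemma overlap_normalized_eigenproj w : 0 < weight w -> #|L|%:R = N ->
  (`|inner f (normalize (eigenproj w f))| / norm2 f) ^+ 2 = weight w / (N * inner f f).
Proof.
move=> w_gt0 cardL.
rewrite inner_normalize_r inner_eigenproj -eigenproj_adj -/(weight w) cardL.
have Nw_ge0 : 0 <= N * weight w by rewrite mulr_ge0 ?ltW ?N_gt0.
rewrite expr_div_n /norm2 sqrtCK normrM normfV (ger0_norm (ltW w_gt0)).
rewrite ger0_norm ?sqrtC_ge0 // exprMn exprVn sqrtCK.
by field; rewrite N_neq0 !gt_eqF.
Qed.

End Weights.

Lemma sweyl_normalize_eigenproj f w v : v \in L ->
  rho v (normalize (eigenproj w f)) =
  (fun x => sgnF2 C (sympl v w) * normalize (eigenproj w f) x).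
Proof.
move=> vL; rewrite /normalize sweylZ sweyl_eigenproj //.
by apply: funext => x; rewrite mulrCA.
Qed.

End SignedRepresentation.

End Stabilizer.

Theorem lemma2p18 (R : realType) (n : nat) (f : vec n -> R[i])
  (hf : exists x, f x != 0) (L : {set vec n * vec n}) (hL : lagrangian L) :
  exists phi : vec n -> R[i],
    [/\ stabilizer_state phi, LagOf phi L &
        PfL f L <= (`|inner f phi| / norm2 f) ^+ 2].
Proof.
have [subL [isoL _]] := hL.
have [s rep] := exists_signed_weyl_rep R subL isoL.
have f_gt0 := inner_gt0 hf.
have [w w_gt0 w_max] := exists_max_weight subL rep f_gt0.
set phi := normalize (eigenproj L s w f).
have phi_norm : inner phi phi = 1 := inner_normalized_eigenproj subL rep w_gt0.
have phi_eig := sweyl_normalize_eigenproj subL rep f w.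
have phiL : LagOf phi L := eigenvector_LagOf hL phi_norm phi_eig.
exists phi; split => //; first exact: LagOf_stabilizer phi_norm phiL.
rewrite overlap_normalized_eigenproj ?(card_LagOf phi_norm phiL) //.
exact: PfL_le_max_weight.
Qed.
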